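(* For all integers $n\ge1$ and $1\le q\le 2^{n-1}$, we have $\overline{\xi_f}(E_{2^n/q})=\dfrac{2^n}{q}$.
   Context: For $p,k\in\mathbb{N}$ with $p/k\ge2$, the fraction graph $E_{p/k}$ has vertex set $\mathbb{Z}_p$, and distinct vertices $i,j$ are adjacent iff their cyclic distance $\min(|i-j|,p-|i-j|)$ is strictly less than $k$; here $p=2^n$, $k=q$. For a graph $G$, $\overline{\xi_f}(G)$ (complement of the projective rank) is the infimum of $d/r$ over all $d,r\in\mathbb{N}$ for which there is an assignment of $r$-dimensional subspaces $W_v\le\mathbb{C}^d$ to the vertices of $G$ such that distinct non-adjacent vertices receive orthogonal subspaces. *)

From mathcomp Require Import all_boot all_algebra.
From mathcomp Require Import complex.
From mathcomp Require Import classical_sets reals Rstruct.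
Import GRing.Theory Num.Theory.

Set Implicit Arguments.
Unset Strict Implicit.
Unset Printing Implicit Defensive.

Local Open Scope ring_scope.

Definition C : numClosedFieldType := (Rdefinitions.R)[i].

Definition adjmx (m n : nat) (A : 'M[C]_(m, n)) : 'M[C]_(n, m) :=
  (map_mx Num.conj A)^T.

(** An orthogonal representation in dimension [d] with rank
    [r]: an assignment of r-dimensional subspaces W_v <= C^d (the row spaces
    of full-rank r x d matrices) such that distinct non-adjacent vertices
    receive orthogonal subspaces (w.r.t. the standard Hermitian product). *)
Definition subspace_rep (V : finType) (adj : rel V) (d r : nat) : Prop :=
  exists W : V -> 'M[C]_(r, d),
    (forall v, \rank (W v) = r) /\
    (forall u v, u != v -> ~~ adj u v -> W u *m adjmx (W v) = 0).

Definition xi_f_bar (V : finType) (adj : rel V) : Rdefinitions.R :=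
  inf [set x : Rdefinitions.R | exists d r : nat, (0 < d)%N /\ (0 < r)%N /\
         subspace_rep adj d r /\ x = (d%:R / r%:R)].

Definition cycdist (p : nat) (i j : 'I_p) : nat :=
  minn ((i - j) + (j - i))%N (p - ((i - j) + (j - i)))%N.

Definition fraction_graph (p k : nat) : rel 'I_p :=
  fun i j => (i != j) && (cycdist i j < k)%N.
Arguments fraction_graph p k : clear implicits.

From HB Require Import structures.
From mathcomp Require Import all_boot all_order all_algebra.
From mathcomp Require Import complex classical_sets reals Rstruct.
From mathcomp Require Import zify.
Import Order.TTheory GRing.Theory Num.Theory.

Set Implicit Arguments.
Unset Strict Implicit.
Unset Printing Implicit Defensive.

(* Upper bound: in C^p the windows W_i = span(e_i, ..., e_(i+q-1)), indices
   mod p, are q-dimensional, and two windows whose starting points are at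
   cyclic distance >= q are disjoint, hence orthogonal.

   Lower bound: call (p, q) good if any subspaces W_0, ..., W_(p-1) of C^d with
   W_x orthogonal to W_y whenever x and y are at cyclic distance >= q satisfy
   sum_x dim W_x <= q d; a representation of E_(p/q) then has p r <= q d.
   (p, 1) is good because pairwise orthogonal subspaces have independent sum.
   If (a, b) is good then so is (2a, 2b): the even and the odd vertices of
   Z_(2a) each carry a copy of the problem for (a, b).  If 2q <= p and both
   (p, q-1) and (p, q+1) are good then so is (p, q): the sums
   W_x + W_(x+1) satisfy the hypothesis for q+1, the intersections
   W_x ∩ W_(x+1) satisfy it for q-1, and their dimensions add up to
   dim W_x + dim W_(x+1).  Induction on n makes (2^n, q) good for
   1 <= q <= 2^(n-1). *)

(* [cycdist i j] is [cdist p i j]; working on nat lets Z_(2p) be split by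
   parity into two copies of Z_p. *)
Definition cdist (p x y : nat) : nat :=
  minn (x - y + (y - x)) (p - (x - y + (y - x))).

Definition csucc (p x : nat) : nat := if x.+1 == p then 0 else x.+1.

Lemma csucc_lt p x : x < p -> csucc p x < p.
Proof. by rewrite /csucc; case: ifP; lia. Qed.

Lemma cdist_gt0 p x y : x < p -> y < p -> (0 < cdist p x y) = (x != y).
Proof. rewrite /cdist; lia. Qed.

Lemma cdist_csuccr p x y : x < p -> y < p ->
  cdist p x y <= (cdist p x (csucc p y)).+1.
Proof. by rewrite /cdist /csucc; case: ifP; lia. Qed.

Lemma cdist_csuccl p x y : x < p -> y < p ->
  cdist p x y <= (cdist p (csucc p x) y).+1.
Proof. by rewrite /cdist /csucc; case: ifP; lia. Qed.

Lemma cdist_csucc p x y : x < p -> y < p ->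
  cdist p (csucc p x) (csucc p y) = cdist p x y.
Proof. by rewrite /cdist /csucc; do 2 case: ifP; lia. Qed.

Lemma cdist_csucc_incr p x y : x < p -> y < p -> (cdist p x y).+1.*2 <= p ->
  cdist p x (csucc p y) = (cdist p x y).+1 \/
  cdist p (csucc p x) y = (cdist p x y).+1.
Proof. by rewrite /cdist /csucc; do 2 case: ifP; lia. Qed.

Lemma cdist_double p x y e : e <= 1 ->
  cdist (2 * p) (2 * x + e) (2 * y + e) = 2 * cdist p x y.
Proof. rewrite /cdist; lia. Qed.

Lemma big_nat_csucc (R : Type) (idx : R) (op : Monoid.com_law idx) p F :
  \big[op/idx]_(0 <= x < p) F (csucc p x) = \big[op/idx]_(0 <= x < p) F x.
Proof.
case: p => [|p]; first by rewrite !big_nil.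
rewrite big_nat_recr //= big_nat_recl //= {2}/csucc eqxx Monoid.mulmC.
congr (op _ _); apply: eq_big_nat => x /andP[_ xp].
by rewrite /csucc ifN //; lia.
Qed.

Lemma big_nat_even_odd (R : Type) (idx : R) (op : Monoid.com_law idx) a F :
  \big[op/idx]_(0 <= x < 2 * a) F x =
  op (\big[op/idx]_(0 <= i < a) F (2 * i))
     (\big[op/idx]_(0 <= i < a) F (2 * i + 1)).
Proof.
elim: a => [|a IHa]; first by rewrite muln0 !big_nil Monoid.mulm1.
have -> : 2 * a.+1 = (2 * a).+2 by rewrite mulnS.
rewrite !big_nat_recr //= IHa addn1 -!Monoid.mulmA; congr (op _ _).
exact: Monoid.mulmCA.
Qed.

Lemma modn_lt_double p x : x < 2 * p -> x %% p = if x < p then x else x - p.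
Proof.
case: ifP => [xp _ | /negbT]; first exact: modn_small.
by rewrite -leqNgt => px xp; rewrite -{1}(subnK px) modnDr modn_small //; lia.
Qed.

Lemma window_disjoint p q u v a c : u < p -> v < p -> a < q -> c < q ->
  q <= cdist p u v -> (u + a) %% p != (v + c) %% p.
Proof.
by rewrite /cdist => *; rewrite !modn_lt_double; try lia; do 2 case: ifP; lia.
Qed.

(* Locked: otherwise unification and [done] unfold it into matrix
   computations over the reals, which take minutes. *)
HB.lock Definition orthogonalmx m1 m2 d (A : 'M[C]_(m1, d)) (B : 'M[C]_(m2, d))
  : bool := (A <= orthomx Num.conj (hermitian1mx d) B)%MS.

Section Orthogonality.
Variable d : nat.

Lemma orthogonalmxE m1 m2 (A : 'M[C]_(m1, d)) (B : 'M[C]_(m2, d)) :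
  orthogonalmx A B = (A *m adjmx B == 0)%R.
Proof. by rewrite orthogonalmx.unlock orthomx1E /adjmx map_trmx. Qed.

Lemma orthogonalmxC m1 m2 (A : 'M[C]_(m1, d)) (B : 'M[C]_(m2, d)) :
  orthogonalmx A B = orthogonalmx B A.
Proof. by rewrite orthogonalmx.unlock orthomx_sym. Qed.

Lemma orthogonalmx_addsl m1 m2 m3
    (A1 : 'M[C]_(m1, d)) (A2 : 'M[C]_(m2, d)) (B : 'M[C]_(m3, d)) :
  orthogonalmx (A1 + A2)%MS B = orthogonalmx A1 B && orthogonalmx A2 B.
Proof. by rewrite orthogonalmx.unlock addsmx_sub. Qed.

Lemma orthogonalmx_addsr m1 m2 m3
    (A : 'M[C]_(m1, d)) (B1 : 'M[C]_(m2, d)) (B2 : 'M[C]_(m3, d)) :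
  orthogonalmx A (B1 + B2)%MS = orthogonalmx A B1 && orthogonalmx A B2.
Proof. by rewrite orthogonalmxC orthogonalmx_addsl !(orthogonalmxC _ A). Qed.

Lemma orthogonalmx_subl m1 m1' m2
    (A : 'M[C]_(m1, d)) (A' : 'M[C]_(m1', d)) (B : 'M[C]_(m2, d)) :
  (A <= A')%MS -> orthogonalmx A' B -> orthogonalmx A B.
Proof. by rewrite orthogonalmx.unlock => /submx_trans; apply. Qed.

Lemma orthogonalmx_subr m1 m2 m2'
    (A : 'M[C]_(m1, d)) (B : 'M[C]_(m2, d)) (B' : 'M[C]_(m2', d)) :
  (B <= B')%MS -> orthogonalmx A B' -> orthogonalmx A B.
Proof. by rewrite !(orthogonalmxC A); apply: orthogonalmx_subl. Qed.

Lemma mxrank_adds_orthogonal m1 m2 (A : 'M[C]_(m1, d)) (B : 'M[C]_(m2, d)) :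
  orthogonalmx A B -> \rank (A + B)%MS = \rank A + \rank B.
Proof. by rewrite orthogonalmx.unlock => /orthomx_disj/mxrank_disjoint_sum. Qed.

Lemma mxrank_sum_orthogonal m (W : nat -> 'M[C]_(m, d)) k :
  (forall x y, x < y < k -> orthogonalmx (W x) (W y)) ->
  \rank (\sum_(0 <= x < k) <<W x>>)%MS = \sum_(0 <= x < k) \rank (W x).
Proof.
elim: k => [|k IHk] Worth; first by rewrite !big_nil mxrank0.
rewrite !big_nat_recr //= mxrank_adds_orthogonal ?IHk ?genmxE //.
  by move=> x y /andP[xy yk]; rewrite Worth // xy ltnW.
apply: (orthogonalmx_subr (B' := W k)); first by rewrite genmxE.
rewrite orthogonalmx.unlock big_mkord.
apply/sumsmx_subP => x _; rewrite genmxE.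
by have := Worth x k; rewrite orthogonalmx.unlock ltn_ord leqnn; apply.
Qed.

End Orthogonality.

(* The ranks may vary with x: the odd step below passes to sums and
   intersections of consecutive subspaces. *)
Definition cyclic_rank_bound (p q : nat) : Prop :=
  forall m d (W : nat -> 'M[C]_(m, d)),
    (forall x y, x < p -> y < p -> q <= cdist p x y ->
       orthogonalmx (W x) (W y)) ->
    \sum_(0 <= x < p) \rank (W x) <= q * d.

Lemma cyclic_rank_bound1 p : cyclic_rank_bound p 1.
Proof.
move=> m d W Wfar; rewrite mul1n -mxrank_sum_orthogonal ?rank_leq_col //.
by move=> x y /andP[xy yp]; rewrite Wfar ?cdist_gt0 ?(ltn_trans xy) ?ltn_eqF.
Qed.

Lemma cyclic_rank_bound_double a b :
  cyclic_rank_bound a b -> cyclic_rank_bound (2 * a) (2 * b).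
Proof.
move=> bound_ab m d W Wfar.
have parity e : e <= 1 -> \sum_(0 <= i < a) \rank (W (2 * i + e)) <= b * d.
  move=> e1; apply: bound_ab => x y xa ya dxy.
  by rewrite Wfar ?cdist_double ?leq_pmul2l //; lia.
have := parity 0 isT; under eq_bigr do rewrite addn0.
rewrite big_nat_even_odd /= -mulnA mul2n -addnn => even_le.
by rewrite leq_add ?parity.
Qed.

Lemma cyclic_rank_bound_odd p q : 0 < q -> 2 * q <= p ->
  cyclic_rank_bound p q.-1 -> cyclic_rank_bound p q.+1 -> cyclic_rank_bound p q.
Proof.
move=> q0 qp bound_pred bound_succ m d W Wfar.
pose U x := (W x + W (csucc p x))%MS.
pose V x := (W x :&: W (csucc p x))%MS.
have Ufar x y : x < p -> y < p -> q < cdist p x y -> orthogonalmx (U x) (U y).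
  move=> xp yp dxy; have [sxp syp] := (csucc_lt xp, csucc_lt yp).
  have dxy' := ltnW dxy.
  have dxsy : q <= cdist p x (csucc p y).
    by rewrite -ltnS (leq_trans dxy) ?cdist_csuccr.
  have dsxy : q <= cdist p (csucc p x) y.
    by rewrite -ltnS (leq_trans dxy) ?cdist_csuccl.
  have dsxsy : q <= cdist p (csucc p x) (csucc p y) by rewrite cdist_csucc.
  by rewrite orthogonalmx_addsl !orthogonalmx_addsr !Wfar.
have Vfar x y :
    x < p -> y < p -> q.-1 <= cdist p x y -> orthogonalmx (V x) (V y).
  move=> xp yp dxy; have [sxp syp] := (csucc_lt xp, csucc_lt yp).
  have [qd | dq] := leqP q (cdist p x y).
    apply: (orthogonalmx_subl (capmxSl _ _)).
    by apply: (orthogonalmx_subr (capmxSl _ _)); rewrite Wfar.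
  have {}dq : q = (cdist p x y).+1 by lia.
  have dp : (cdist p x y).+1.*2 <= p by rewrite -dq -mul2n.
  have [dy | dx] := cdist_csucc_incr xp yp dp.
    apply: (orthogonalmx_subl (capmxSl _ _)).
    by apply: (orthogonalmx_subr (capmxSr _ _)); rewrite Wfar // dy dq.
  apply: (orthogonalmx_subl (capmxSr _ _)).
  by apply: (orthogonalmx_subr (capmxSl _ _)); rewrite Wfar // dx dq.
have UV_W : \sum_(0 <= x < p) \rank (U x) + \sum_(0 <= x < p) \rank (V x) =
            2 * \sum_(0 <= x < p) \rank (W x).
  rewrite -big_split mul2n -addnn.
  rewrite -[X in _ = _ + X](big_nat_csucc _ _ (fun x => \rank (W x))).
  rewrite -big_split.
  by apply: eq_bigr => x _; exact: mxrank_sum_cap.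
have := leq_add (bound_succ _ _ U Ufar) (bound_pred _ _ V Vfar).
rewrite UV_W -mulnDl addSnnS prednK // addnn -mul2n -mulnA.
by rewrite leq_pmul2l.
Qed.

Lemma cyclic_rank_bound_pow2 n q :
  0 < q <= 2 ^ n -> cyclic_rank_bound (2 ^ n.+1) q.
Proof.
elim: n q => [|n IHn] q /andP[q0 qn].
  by rewrite (_ : q = 1); [apply: cyclic_rank_bound1 | lia].
have [-> | q_neq1] := eqVneq q 1; first exact: cyclic_rank_bound1.
have half b : 0 < b <= 2 ^ n -> cyclic_rank_bound (2 ^ n.+2) (2 * b).
  by move=> bn; rewrite expnS; apply/cyclic_rank_bound_double/IHn.
have q_half := odd_double_half q; rewrite -mul2n in q_half.
have e1 := expnS 2 n; have e2 := expnS 2 n.+1.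
case: (boolP (odd q)) q_half => odd_q q_half; last first.
  by rewrite -q_half; apply: half; lia.
apply: cyclic_rank_bound_odd => //; first by lia.
  by rewrite (_ : q.-1 = 2 * q./2); [apply: half | ]; lia.
by rewrite (_ : q.+1 = 2 * q./2.+1); [apply: half | ]; lia.
Qed.

Lemma subspace_rep_fraction_graph_le p q d r : 0 < q -> cyclic_rank_bound p q ->
  subspace_rep (fraction_graph p q) d r -> p * r <= q * d.
Proof.
move=> q0 bound [W [Wrank Worth]].
pose W' x : 'M[C]_(r, d) := if insub x is Some i then W i else 0%R.
have W'E (i : 'I_p) : W' i = W i by rewrite /W' valK.
suff <- : \sum_(0 <= x < p) \rank (W' x) = p * r.
  apply: bound => x y xp yp dxy.
  rewrite -[x]/(val (Ordinal xp)) -[y]/(val (Ordinal yp)) !W'E orthogonalmxE.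
  apply/eqP/Worth.
    by rewrite -val_eqE /= -(cdist_gt0 xp yp) (leq_trans q0).
  by rewrite /fraction_graph negb_and -leqNgt dxy orbT.
rewrite big_mkord (eq_bigr (fun=> r)) => [|i _]; last by rewrite W'E Wrank.
by rewrite sum_nat_const card_ord.
Qed.

Definition window_mx p q (i : nat) : 'M[C]_(q, p) :=
  (\matrix_(a < q, b < p) (b == (i + a) %% p :> nat)%N%:R)%R.

Lemma window_mx_adj p q i j : 0 < p ->
  (window_mx p q i *m adjmx (window_mx p q j) =
   \matrix_(a, c) ((i + a) %% p == (j + c) %% p)%N%:R)%R.
Proof.
move=> p0; apply/matrixP => a c; rewrite !mxE.
have iap : (i + a) %% p < p := ltn_pmod _ p0.
rewrite (bigD1 (Ordinal iap)) //= big1 ?addr0 => [|b ba].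
  by rewrite !mxE rmorph_nat eqxx mul1r.
rewrite !mxE (_ : (b == _ :> nat) = false) ?mul0r //.
by apply: contraNF ba => /eqP b_ia; apply/eqP/val_inj.
Qed.

Lemma mxrank_window_mx p q i : 0 < p -> q <= p -> \rank (window_mx p q i) = q.
Proof.
move=> p0 qp; apply: mxrank_unitary; apply/unitarymxP.
rewrite -map_trmx window_mx_adj //.
apply/matrixP => a c; rewrite !mxE eqn_modDl !modn_small //.
  exact: leq_trans (ltn_ord c) qp.
exact: leq_trans (ltn_ord a) qp.
Qed.

Lemma subspace_rep_window p q :
  0 < q <= p -> subspace_rep (fraction_graph p q) p q.
Proof.
case/andP=> q0 qp; have p0 : 0 < p := leq_trans q0 qp.
exists (fun i : 'I_p => window_mx p q i); split => [i | i j ij].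
  exact: mxrank_window_mx.
rewrite /fraction_graph ij /= -leqNgt => dij.
rewrite window_mx_adj //; apply/matrixP => a c; rewrite !mxE.
have := window_disjoint (ltn_ord i) (ltn_ord j) (ltn_ord a) (ltn_ord c) dij.
by move/negbTE ->.
Qed.

Lemma inf_attained (R : realType) (E : set R) x :
  E x -> lbound E x -> inf E = x.
Proof.
move=> Ex xE; apply/le_anti/andP; split; last by apply: lb_le_inf xE; exists x.
by apply: ge_inf Ex; exists x.
Qed.

Local Open Scope ring_scope.

Theorem corollary18 (n q : nat) :
  (1 <= n)%N -> (1 <= q <= 2 ^ n.-1)%N ->
  xi_f_bar (fraction_graph (2 ^ n) q) = (2 ^ n)%:R / q%:R.
Proof.
move=> n1 /andP[q0 qn].
have pow2 : (2 ^ n = 2 ^ n.-1.+1)%N by rewrite prednK.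
have qp : (0 < q <= 2 ^ n)%N by rewrite q0 pow2 expnS; lia.
apply: inf_attained.
  exists (2 ^ n)%N, q; do !split; rewrite ?expn_gt0 //.
  exact: subspace_rep_window.
move=> _ [d [r [d0 [r0 [rep ->]]]]].
have bound : cyclic_rank_bound (2 ^ n) q.
  by rewrite pow2; apply: cyclic_rank_bound_pow2; rewrite q0.
have := subspace_rep_fraction_graph_le q0 bound rep.
rewrite ler_pdivrMr ?ltr0n // mulrAC ler_pdivlMr ?ltr0n // -!natrM ler_nat.
by rewrite [(d * q)%N]mulnC.
Qed.
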